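(* Let $G$ be an infinite group. Then (i) $Sc_G^{\wedge}=\operatorname{cl}\{\epsilon p: \epsilon\in G^*,\ \epsilon\epsilon=\epsilon,\ p\in\beta G\}$; (ii) $Sc_G^{\wedge}$ is an ideal of the semigroup $\beta G$, and $p\in Sc_G^{\wedge}$ if and only if every member of $p$ contains a piecewise shifted $FP$-set; (iii) $Sc_G^{\wedge}$ is the smallest closed ideal of $\beta G$ containing all idempotents of $G^*$.
   Context: $\beta G$ is the compact right topological semigroup of ultrafilters on discrete $G$ ($gp=\{gP:P\in p\}$; $pq$ generated by $\bigcup_{x\in P}xQ_x$, $P\in p$, $Q_x\in q$), $G^*$ the free ultrafilters, $X^*=\{p\in G^*:X\in p\}$. For $p\in G^*$, $\Delta_p(X)=\{gp:g\in G, X\in gp\}$. $A\subseteq G$ is scattered if for every infinite $X\subseteq A$ there is $p\in X^*$ with $\Delta_p(X)$ finite; $Sc_G$ is the ideal of scattered subsets, and $Sc_G^{\wedge}=\{p\in\beta G: G\setminus A\in p$ for each $A\in Sc_G\}$. Given an injective sequence $(g_n)$ and a sequence $(b_n)$ in $G$, the set $\{g_{i_1}\cdots g_{i_k}b_{i_k}: k\ge1, 0\le i_1<\dots<i_k<\omega\}$ is a piecewise shifted $FP$-set. *)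

From Stdlib Require Import List Sorting.Sorted Arith.
Import ListNotations.
Set Implicit Arguments.

Record Group := {
  gcar :> Type;
  gmul : gcar -> gcar -> gcar;
  gone : gcar;
  ginv : gcar -> gcar;
  gmul_assoc : forall x y z, gmul x (gmul y z) = gmul (gmul x y) z;
  gmul_1l : forall x, gmul gone x = x;
  gmul_Vl : forall x, gmul (ginv x) x = gone
}.

Section Defs.
Variable G : Group.

Definition gset := G -> Prop.
(* a "point" of betaG is a family of subsets of G (an ultrafilter when
   [ultrafilter p] holds) *)
Definition ufam := gset -> Prop.

Definition finite_set (A : gset) : Prop :=
  exists l : list G, forall x, A x -> In x l.

Definition infinite_group : Prop := ~ exists l : list G, forall x : G, In x l.

Definition ultrafilter (p : ufam) : Prop :=
  p (fun _ => True) /\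
  ~ p (fun _ => False) /\
  (forall A B : gset, p A -> (forall x, A x -> B x) -> p B) /\
  (forall A B : gset, p A -> p B -> p (fun x => A x /\ B x)) /\
  (forall A : gset, p A \/ p (fun x => ~ A x)).

Definition free (p : ufam) : Prop :=
  ultrafilter p /\ forall A, p A -> ~ finite_set A.

Definition star (X : gset) (p : ufam) : Prop := free p /\ p X.

Definition ueq (p q : ufam) : Prop := forall A, p A <-> q A.

Definition utrans (g : G) (p : ufam) : ufam :=
  fun A => exists P, p P /\ forall x, A x <-> exists y, P y /\ x = gmul G g y.

Definition uprod (p q : ufam) : ufam :=
  fun A => exists P : gset, p P /\
    exists Q : G -> gset, (forall x, P x -> q (Q x)) /\
      (forall x y, P x -> Q x y -> A (gmul G x y)).

(* Delta_p(X) = { gp : g in G, X in gp } is finite (up to equality of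
   ultrafilters) *)
Definition Delta_finite (p : ufam) (X : gset) : Prop :=
  exists l : list G, forall g : G, utrans g p X ->
    exists h, In h l /\ ueq (utrans g p) (utrans h p).

Definition scattered (A : gset) : Prop :=
  forall X : gset, (forall x, X x -> A x) -> ~ finite_set X ->
    exists p, star X p /\ Delta_finite p X.

Definition Sc_hat (p : ufam) : Prop :=
  ultrafilter p /\ forall A, scattered A -> p (fun x => ~ A x).

(* closure in betaG (basic open sets are {q : A in q}) *)
Definition ucl (S : ufam -> Prop) (p : ufam) : Prop :=
  ultrafilter p /\ forall A, p A -> exists q, S q /\ q A.

Definition uclosed (S : ufam -> Prop) : Prop :=
  (forall p, S p -> ultrafilter p) /\ forall p, ucl S p -> S p.

Definition uideal (S : ufam -> Prop) : Prop :=
  (forall p, S p -> ultrafilter p) /\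
  (exists p, S p) /\
  forall p q, S p -> ultrafilter q -> S (uprod p q) /\ S (uprod q p).

Definition idempotent (e : ufam) : Prop := ueq (uprod e e) e.

Definition idem_translates (q : ufam) : Prop :=
  exists e p, free e /\ idempotent e /\ ultrafilter p /\ ueq q (uprod e p).

Fixpoint gprodl (g : nat -> G) (l : list nat) : G :=
  match l with
  | [] => gone G
  | i :: l' => gmul G (g i) (gprodl g l')
  end.

Definition psFP (g b : nat -> G) : gset :=
  fun x => exists l : list nat, l <> [] /\ Sorted lt l /\
    x = gmul G (gprodl g l) (b (last l 0)).

Definition contains_psFP (A : gset) : Prop :=
  exists g b : nat -> G, (forall m n, g m = g n -> m = n) /\
    forall x, psFP g b x -> A x.

End Defs.

(* A subset of G is non-scattered iff it contains a piecewise shifted FP-set iff it is a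
   member of εp for some idempotent ε ∈ G* and some p ∈ βG.  Hence Sc_G^ consists of the
   ultrafilters all of whose members are non-scattered, and (i)-(iii) follow, using that
   scattered sets are invariant under left translation.

   Non-scattered ⇒ εp: take an infinite X ⊆ A with Δ_q(X) infinite for every q ∈ X*.  Then
   every q ∈ X* has a free r with rq ∈ X*; a Zorn-minimal closed set of points with this
   property consists of points y ∈ G*y, and Ellis–Numakura in the closed semigroup
   {r ∈ G* : ry = y} yields ε with εy = y.
   εp ⇒ FP-set: Galvin–Glazer, choosing g_n in the star-set of {x : x⁻¹A ∈ p} and b_n in
   the finitely many translates of A that lie in p.
   FP-set X ⇒ non-scattered: a free q ∋ X lives on a translate a·X_n of a tail of X, so the
   n ultrafilters g_i a⁻¹ q (i < n) contain X; they are pairwise distinct because gq ≠ q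
   for g ≠ 1 (Katětov), so Δ_q(X) is infinite. *)

From Stdlib Require Import List Sorting.Sorted Arith Lia Classical ClassicalEpsilon
  FunctionalExtensionality PropExtensionality.
From mathcomp Require boolp classical_sets.
Import ListNotations.
Set Implicit Arguments.
Unset Strict Implicit.

Lemma zorn_preorder (T : Type) (t0 : T) (R : T -> T -> Prop) :
  (forall t, R t t) -> (forall r s t, R r s -> R s t -> R r t) ->
  (forall C : T -> Prop, (forall s t, C s -> C t -> R s t \/ R t s) ->
     exists t, forall s, C s -> R s t) ->
  exists t, forall s, R t s -> R s t.
Proof.
  intros Hrefl Htrans Hchain.
  destruct (@classical_sets.ZL_preorder T t0 (fun a b => boolp.asbool (R a b)))
    as [t Ht].
  - intro t; apply boolp.asboolT, Hrefl.
  - intros r s t Hrs Hst; apply boolp.asboolT.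
    exact (Htrans _ _ _ (boolp.asboolW Hrs) (boolp.asboolW Hst)).
  - intros C HC. destruct (Hchain C) as [t Ht].
    + intros s u Cs Cu. destruct (HC s u Cs Cu) as [H|H];
        [left|right]; exact (boolp.asboolW H).
    + exists t; intros s Cs; apply boolp.asboolT, Ht, Cs.
  - exists t; intros s Rts. apply boolp.asboolW, Ht, boolp.asboolT, Rts.
Qed.

Definition nested (T : Type) (K : (T -> Prop) -> Prop) : Prop :=
  forall C D, K C -> K D -> (forall t, C t -> D t) \/ (forall t, D t -> C t).

Lemma zorn_minimal_set (T : Type) (P : (T -> Prop) -> Prop) (C0 : T -> Prop) : P C0 ->
  (forall K, (exists C, K C) -> (forall C, K C -> P C) -> nested K ->
     P (fun t => forall C, K C -> C t)) ->
  exists M, P M /\ (forall t, M t -> C0 t) /\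
    forall D, P D -> (forall t, D t -> M t) -> forall t, M t -> D t.
Proof.
  intros P0 Hchain.
  set (S := {C | P C /\ forall t, C t -> C0 t}).
  set (top := exist _ C0 (conj P0 (fun t Ht => Ht)) : S).
  destruct (@zorn_preorder S top (fun c d => forall t, proj1_sig d t -> proj1_sig c t))
    as [[M [PM HM]] Hmin]; auto.
  - intros Ch HCh. destruct (classic (exists c, Ch c)) as [[c0 Hc0]|N].
    + set (K := fun C => exists c : S, Ch c /\ proj1_sig c = C).
      assert (HK : P (fun t => forall C, K C -> C t)).
      { apply Hchain.
        - exists (proj1_sig c0), c0; auto.
        - intros C [c [_ <-]]. apply (proj2_sig c).
        - intros C D [c [Hc <-]] [d [Hd <-]]. destruct (HCh c d Hc Hd); auto. }
      assert (HK0 : forall t, (forall C, K C -> C t) -> C0 t).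
      { intros t Ht. apply (proj2_sig c0), Ht. exists c0; auto. }
      exists (exist _ (fun t => forall C, K C -> C t) (conj HK HK0) : S).
      intros c Hc t Ht. apply Ht. exists c; auto.
    + exists top. intros c Hc; destruct N; eauto.
  - exists M. split; auto. split; auto. intros D PD HDM.
    exact (Hmin (exist _ D (conj PD (fun t Ht => HM t (HDM t Ht)))) HDM).
Qed.

Lemma StronglySorted_app_inv (l1 l2 : list nat) : StronglySorted lt (l1 ++ l2) ->
  StronglySorted lt l1 /\ forall x y, In x l1 -> In y l2 -> x < y.
Proof.
  induction l1 as [|a l1 IH]; simpl; intro H.
  - split; [constructor|tauto].
  - apply StronglySorted_inv in H. destruct H as [H1 H2].
    destruct (IH H1) as [h1 h2]. rewrite Forall_forall in H2. split.
    + constructor; auto. apply Forall_forall. intros; apply H2, in_app_iff; auto.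
    + intros x y [<-|hx] hy; auto. apply H2, in_app_iff; auto.
Qed.

Lemma Sorted_lt_strong (l : list nat) : Sorted lt l -> StronglySorted lt l.
Proof. apply Sorted_StronglySorted. intros x y z; lia. Qed.

Lemma last_cons_ne (i : nat) l d : l <> [] -> last (i :: l) d = last l d.
Proof. destruct l; [congruence|reflexivity]. Qed.

Lemma injective_bound (T : Type) (F : nat -> T) (L : list T) n :
  (forall i j, i < n -> j < n -> F i = F j -> i = j) ->
  (forall i, i < n -> In (F i) L) -> n <= length L.
Proof.
  intros Hinj HL.
  replace n with (length (map F (seq 0 n))) by now rewrite length_map, length_seq.
  apply NoDup_incl_length.
  - apply NoDup_map_NoDup_ForallPairs; [|apply seq_NoDup].
    intros i j Hi Hj. apply in_seq in Hi, Hj. apply Hinj; lia.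
  - intros y Hy. apply in_map_iff in Hy as [i [<- Hi]]. apply in_seq in Hi. apply HL; lia.
Qed.

Section BetaG.
Variable G : Group.
Local Notation "x ** y" := (gmul G x y) (at level 40, left associativity).
Local Notation one := (gone G).
Local Notation inv := (ginv G).
Implicit Types (p q r e y : ufam G) (A B C X : gset G) (a g h x z : G).

Lemma mulg_cancel_l a x z : a ** x = a ** z -> x = z.
Proof.
  intro H. rewrite <- (gmul_1l G x), <- (gmul_1l G z), <- (gmul_Vl G a).
  rewrite <- !gmul_assoc, H. reflexivity.
Qed.

Lemma mulgV x : x ** inv x = one.
Proof.
  apply (@mulg_cancel_l (inv x)). rewrite gmul_assoc, gmul_Vl, gmul_1l.
  apply (@mulg_cancel_l (inv (inv x))). rewrite gmul_assoc, gmul_Vl, gmul_1l. reflexivity.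
Qed.

Lemma mulg1 x : x ** one = x.
Proof. rewrite <- (gmul_Vl G x), gmul_assoc, mulgV, gmul_1l. reflexivity. Qed.

Lemma mulg_cancel_r a x z : x ** a = z ** a -> x = z.
Proof.
  intro H. rewrite <- (mulg1 x), <- (mulg1 z), <- (mulgV a), !gmul_assoc, H.
  reflexivity.
Qed.

Lemma mulKVg a x : a ** (inv a ** x) = x.
Proof. rewrite gmul_assoc, mulgV, gmul_1l. reflexivity. Qed.

Lemma mulKg a x : inv a ** (a ** x) = x.
Proof. rewrite gmul_assoc, gmul_Vl, gmul_1l. reflexivity. Qed.

Lemma mulgK a x : a ** x ** inv x = a.
Proof. rewrite <- gmul_assoc, mulgV, mulg1. reflexivity. Qed.

Lemma ueq_eq p q : ueq p q -> p = q.
Proof.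
  intro H; apply functional_extensionality; intro x; apply propositional_extensionality; auto.
Qed.

Section Ultrafilter.
Variable p : ufam G.
Hypothesis Hp : ultrafilter p.

Lemma uf_setT : p (fun _ => True).
Proof. apply Hp. Qed.

Lemma uf_superset A B : p A -> (forall x, A x -> B x) -> p B.
Proof. apply Hp. Qed.

Lemma uf_inter A B : p A -> p B -> p (fun x => A x /\ B x).
Proof. apply Hp. Qed.

Lemma uf_em A : p A \/ p (fun x => ~ A x).
Proof. apply Hp. Qed.

Lemma uf_nonempty A : p A -> exists x, A x.
Proof.
  intro HA. apply NNPP; intro N. apply (proj1 (proj2 Hp)).
  apply (uf_superset HA). intros x Ax; apply N; eauto.
Qed.

Lemma uf_compl_excl A : p A -> ~ p (fun x => ~ A x).
Proof.
  intros HA HN. destruct (uf_nonempty (uf_inter HA HN)) as [x [H1 H2]]; auto.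
Qed.

Lemma uf_compl A : ~ p A -> p (fun x => ~ A x).
Proof. intro H; destruct (uf_em A); tauto. Qed.

Lemma uf_union A B : p (fun x => A x \/ B x) -> p A \/ p B.
Proof.
  intro H. destruct (uf_em A) as [|HA]; auto. destruct (uf_em B) as [|HB]; auto.
  exfalso. apply (uf_compl_excl H). apply (uf_superset (uf_inter HA HB)). tauto.
Qed.

Lemma uf_big_inter (T : Type) (L : list T) (S : T -> gset G) :
  (forall t, In t L -> p (S t)) -> p (fun x => forall t, In t L -> S t x).
Proof.
  induction L as [|a L IH]; intro H.
  - apply (uf_superset uf_setT). simpl; tauto.
  - assert (H1 := H a (or_introl eq_refl)).
    assert (H2 : p (fun x => forall t, In t L -> S t x)) by (apply IH; intros t Ht; apply H; right; exact Ht).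
    apply (uf_superset (uf_inter H1 H2)). simpl. intros x [h1 h2] t [<-|Ht]; auto.
Qed.

End Ultrafilter.

Lemma uf_eq_of_sub p q : ultrafilter p -> ultrafilter q -> (forall A, p A -> q A) -> q = p.
Proof.
  intros Hp Hq H. apply ueq_eq. intro A; split; auto.
  intro HA. destruct (uf_em Hp A) as [|HN]; auto.
  destruct (uf_compl_excl Hq HA (H _ HN)).
Qed.

Lemma free_uf p : free p -> ultrafilter p.
Proof. intros [H _]; exact H. Qed.

Lemma free_notin_list p L : free p -> p (fun x => ~ In x L).
Proof.
  intros [Hp Hfin].
  assert (H : p (fun x => forall t, In t L -> x <> t)).
  { apply (uf_big_inter Hp). intros t _. apply (uf_compl Hp). intro Ht.
    apply (Hfin _ Ht). exists [t]. intros x ->; simpl; auto. }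
  apply (uf_superset Hp H). intros x Hx Hin. exact (Hx x Hin eq_refl).
Qed.

Lemma uprodE p q A : ultrafilter p -> ultrafilter q ->
  (uprod p q A <-> p (fun x => q (fun z => A (x ** z)))).
Proof.
  intros Hp Hq; split.
  - intros [P [HP [Q [HQ HA]]]]. apply (uf_superset Hp HP). intros x Px.
    apply (uf_superset Hq (HQ x Px)). intros z Qz; apply HA; auto.
  - intro H. exists (fun x => q (fun z => A (x ** z))). split; auto.
    exists (fun x z => A (x ** z)). split; auto.
Qed.

Lemma utransE g p A : ultrafilter p -> (utrans g p A <-> p (fun x => A (g ** x))).
Proof.
  intro Hp; split.
  - intros [P [HP E]]. apply (uf_superset Hp HP). intros x Px. apply E; eauto.
  - intro H. exists (fun x => A (g ** x)); split; auto. intro x; split.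
    + intro Ax. exists (inv g ** x). rewrite mulKVg. auto.
    + intros [z [Az ->]]; auto.
Qed.

Lemma uprod_uf p q : ultrafilter p -> ultrafilter q -> ultrafilter (uprod p q).
Proof.
  intros Hp Hq. split; [|split; [|split; [|split]]]; [| |intros A B|intros A B|intros A];
    rewrite ?uprodE by assumption.
  - apply (uf_superset Hp (uf_setT Hp)). intros; apply uf_setT, Hq.
  - intro H. destruct (uf_nonempty Hp H) as [x Hx]. destruct (uf_nonempty Hq Hx) as [z []].
  - intros HA HAB. apply (uf_superset Hp HA). intros x Hx. apply (uf_superset Hq Hx). auto.
  - intros HA HB. apply (uf_superset Hp (uf_inter Hp HA HB)). intros x [h1 h2].
    apply (uf_inter Hq h1 h2).
  - destruct (uf_em Hp (fun x => q (fun z => A (x ** z)))) as [|H]; auto.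
    right. apply (uf_superset Hp H). intros x Hx. apply (uf_compl Hq Hx).
Qed.

Lemma utrans_uf g p : ultrafilter p -> ultrafilter (utrans g p).
Proof.
  intro Hp. split; [|split; [|split; [|split]]]; [| |intros A B|intros A B|intros A];
    rewrite ?utransE by assumption.
  - apply uf_setT, Hp.
  - intro H. destruct (uf_nonempty Hp H) as [x []].
  - intros HA HAB. apply (uf_superset Hp HA). auto.
  - apply (uf_inter Hp).
  - apply (uf_em Hp (fun x => A (g ** x))).
Qed.

Lemma uprodA p q r : ultrafilter p -> ultrafilter q -> ultrafilter r ->
  uprod (uprod p q) r = uprod p (uprod q r).
Proof.
  intros Hp Hq Hr. apply ueq_eq; intro A.
  rewrite !uprodE by (try apply uprod_uf; assumption).
  split; intro H; apply (uf_superset Hp H); intros x Hx;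
    rewrite uprodE in * by assumption;
    apply (uf_superset Hq Hx); intros z Hz;
    apply (uf_superset Hr Hz); intros w; rewrite gmul_assoc; auto.
Qed.

Lemma uprod_free p q : ultrafilter p -> free q -> free (uprod p q).
Proof.
  intros Hp [Hq Hfin]. split; [apply uprod_uf; auto|].
  intros A HA [L HL]. rewrite uprodE in HA by assumption.
  destruct (uf_nonempty Hp HA) as [x Hx]. apply (Hfin _ Hx).
  exists (map (fun z => inv x ** z) L). intros z Hz.
  rewrite <- (mulKg x z). apply in_map; auto.
Qed.

Lemma utrans_free g p : free p -> free (utrans g p).
Proof.
  intros [Hp Hfin]. split; [apply utrans_uf; auto|].
  intros A HA [L HL]. rewrite utransE in HA by assumption. apply (Hfin _ HA).
  exists (map (fun z => inv g ** z) L). intros z Hz.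
  rewrite <- (mulKg g z). apply in_map; auto.
Qed.

Lemma utransM a b p : ultrafilter p -> utrans a (utrans b p) = utrans (a ** b) p.
Proof.
  intro Hp. apply ueq_eq; intro A. rewrite !utransE by (try apply utrans_uf; assumption).
  split; intro H; apply (uf_superset Hp H); intros x; rewrite gmul_assoc; auto.
Qed.

Lemma utrans1 p : ultrafilter p -> utrans one p = p.
Proof.
  intro Hp. apply ueq_eq; intro A. rewrite utransE by assumption.
  split; intro H; apply (uf_superset Hp H); intros x; rewrite gmul_1l; auto.
Qed.

Definition is_filter (F : ufam G) : Prop :=
  F (fun _ => True) /\ ~ F (fun _ => False) /\
  (forall A B, F A -> (forall x, A x -> B x) -> F B) /\
  (forall A B, F A -> F B -> F (fun x => A x /\ B x)).

Lemma filter_chain_union (Ch : ufam G -> Prop) :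
  (exists c, Ch c) -> (forall c, Ch c -> is_filter c) ->
  (forall c d, Ch c -> Ch d -> (forall A, c A -> d A) \/ (forall A, d A -> c A)) ->
  is_filter (fun A => exists c, Ch c /\ c A).
Proof.
  intros [c0 Hc0] Hfilt Hchain. split; [|split; [|split]].
  - exists c0; split; auto. apply (Hfilt _ Hc0).
  - intros [c [Hc H]]. exact (proj1 (proj2 (Hfilt _ Hc)) H).
  - intros A B [c [Hc HA]] HAB. exists c; split; auto.
    destruct (Hfilt _ Hc) as (_ & _ & c_sup & _). apply (c_sup _ _ HA HAB).
  - intros A B [c [Hc HA]] [d [Hd HB]].
    destruct (Hfilt _ Hc) as (_ & _ & _ & c_inter).
    destruct (Hfilt _ Hd) as (_ & _ & _ & d_inter).
    destruct (Hchain c d Hc Hd) as [Hcd|Hdc].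
    + exists d; split; auto.
    + exists c; split; auto.
Qed.

Lemma maximal_filter_ultrafilter m : is_filter m ->
  (forall q, is_filter q -> (forall A, m A -> q A) -> forall A, q A -> m A) ->
  ultrafilter m.
Proof.
  intros Hm Hmax. destruct Hm as (m_setT & m_set0 & m_sup & m_inter).
  repeat split; auto. intro A.
  destruct (classic (exists P, m P /\ forall x, P x -> ~ A x)) as [[P [HP HPA]]|N].
  - right. apply (m_sup _ _ HP HPA).
  - left. apply (Hmax (fun S => exists P, m P /\ forall x, P x -> A x -> S x)).
    + split; [|split; [|split]].
      * exists (fun _ => True); split; auto.
      * intros [P [HP HPS]]. apply N. exists P; split; auto.
      * intros S B [P [HP HPS]] HSB. exists P; split; auto.
      * intros S B [P [HP HPS]] [Q [HQ HQB]].
        exists (fun x => P x /\ Q x); split; auto. intros x [] Ax; auto.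
    + intros S HS. exists S; split; auto.
    + exists (fun _ => True); split; auto.
Qed.

Lemma filter_ultrafilter_ext F : is_filter F ->
  exists u, ultrafilter u /\ forall A, F A -> u A.
Proof.
  intro HF.
  set (T := {q : ufam G | is_filter q /\ forall A, F A -> q A}).
  set (bottom := exist _ F (conj HF (fun A HA => HA)) : T).
  destruct (@zorn_preorder T bottom (fun c d => forall A, proj1_sig c A -> proj1_sig d A))
    as [[m [Hm HFm]] Hmax]; auto.
  - intros Ch HCh. destruct (classic (exists c, Ch c)) as [[c0 Hc0]|N].
    + set (Ch' := fun q => exists c : T, Ch c /\ proj1_sig c = q).
      assert (Hu : is_filter (fun A => exists q, Ch' q /\ q A)).
      { apply filter_chain_union.
        - exists (proj1_sig c0), c0; auto.
        - intros q [c [_ <-]]. apply (proj2_sig c).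
        - intros q q' [c [Hc <-]] [d [Hd <-]]. apply (HCh c d Hc Hd). }
      assert (HFu : forall A, F A -> exists q, Ch' q /\ q A).
      { intros A HA. exists (proj1_sig c0); split; [exists c0; auto|].
        apply (proj2_sig c0), HA. }
      exists (exist _ (fun A => exists q, Ch' q /\ q A) (conj Hu HFu) : T).
      intros c Hc A HA. exists (proj1_sig c).
      split; [exists c|]; auto.
    + exists bottom. intros c Hc; destruct N; eauto.
  - exists m. split; auto. apply maximal_filter_ultrafilter; auto.
    intros q Hq Hmq. exact (Hmax (exist _ q (conj Hq (fun A HA => Hmq A (HFm A HA)))) Hmq).
Qed.

Lemma filter_base_ultrafilter (F : ufam G) :
  (exists S, F S) -> (forall S, F S -> exists x, S x) ->
  (forall S B, F S -> F B -> exists U, F U /\ forall x, U x -> S x /\ B x) ->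
  exists u, ultrafilter u /\ forall S, F S -> u S.
Proof.
  intros [S0 HS0] Fne Fmeet.
  destruct (@filter_ultrafilter_ext (fun S => exists U, F U /\ forall x, U x -> S x))
    as [u [Hu HFu]].
  - split; [|split; [|split]].
    + exists S0; split; auto.
    + intros [U [FU HU]]. destruct (Fne _ FU) as [x Hx]. exact (HU x Hx).
    + intros A B [U [FU HU]] HAB. exists U; split; auto.
    + intros A B [U [FU HU]] [V [FV HV]]. destruct (Fmeet _ _ FU FV) as [W [FW HW]].
      exists W; split; auto. intros x Wx; destruct (HW x Wx); auto.
  - exists u; split; auto. intros S HS. apply HFu. exists S; split; auto.
Qed.

Lemma free_ultrafilter_exists X : ~ finite_set X -> exists u, free u /\ u X.
Proof.
  intro HX.
  destruct (@filter_base_ultrafilter (fun S => exists L, forall x, S x <-> X x /\ ~ In x L))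
    as [u [Hu HF]].
  - exists X, []. intros; simpl; tauto.
  - intros S [L HL]. apply NNPP; intro N. apply HX. exists L.
    intros x Xx. apply NNPP; intro N2. apply N. exists x. apply HL; auto.
  - intros S B [L1 H1] [L2 H2]. exists (fun x => X x /\ ~ In x (L1 ++ L2)). split.
    + exists (L1 ++ L2); tauto.
    + intros x [Xx Nx]. rewrite H1, H2. rewrite in_app_iff in Nx. tauto.
  - exists u. split; [split; auto|].
    + intros A HA [L HL].
      assert (H := HF (fun x => X x /\ ~ In x L) (ex_intro _ L (fun x => iff_refl _))).
      destruct (uf_nonempty Hu (uf_inter Hu HA H)) as [x [Ax [_ N]]]. auto.
    + apply HF. exists []. intros; simpl; tauto.
Qed.

Implicit Types (K : (ufam G -> Prop) -> Prop) (S T M : ufam G -> Prop).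

Lemma uclosed_directed_inter K :
  (exists S, K S) -> (forall S, K S -> uclosed S /\ exists p, S p) ->
  (forall S T, K S -> K T -> exists M, K M /\ forall p, M p -> S p /\ T p) ->
  exists u, forall S, K S -> S u.
Proof.
  intros [S0 KS0] HK Hdir.
  destruct (@filter_base_ultrafilter (fun A => exists S, K S /\ forall p, S p -> p A))
    as [u [Hu HF]].
  - exists (fun _ => True), S0. split; auto. intros p Sp.
    apply uf_setT, (proj1 (HK _ KS0)), Sp.
  - intros A [S [KS HS]]. destruct (HK _ KS) as [[Suf _] [p Sp]].
    apply (uf_nonempty (Suf _ Sp) (HS _ Sp)).
  - intros A B [S [KS HS]] [T [KT HT]]. destruct (Hdir _ _ KS KT) as [M [KM HM]].
    exists (fun x => A x /\ B x). split; auto.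
    exists M; split; auto. intros p Mp. destruct (HM _ Mp) as [Sp Tp].
    exact (uf_inter (proj1 (proj1 (HK _ KM)) _ Mp) (HS _ Sp) (HT _ Tp)).
  - exists u. intros S KS. destruct (HK _ KS) as [[Suf Scl] _]. apply Scl.
    split; auto. intros A HA. apply NNPP; intro N.
    apply (uf_compl_excl Hu HA), HF. exists S; split; auto.
    intros p Sp. apply (uf_compl (Suf _ Sp)). intro pA; apply N; eauto.
Qed.

Lemma ucl_mono S T p : (forall q, S q -> T q) -> ucl S p -> ucl T p.
Proof. intros H [Hp Hcl]; split; auto. intros A HA; destruct (Hcl A HA) as [q []]; eauto. Qed.

Lemma uclosed_ext S T : (forall p, S p <-> T p) -> uclosed S -> uclosed T.
Proof.
  intros E [Suf Scl]. split; [firstorder|]. intros p Hp. apply E, Scl.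
  eapply ucl_mono; [|exact Hp]. firstorder.
Qed.

Lemma uclosedI S T : uclosed S -> uclosed T -> uclosed (fun p => S p /\ T p).
Proof.
  intros [Suf Scl] [Tuf Tcl]. split; [firstorder|]. intros p Hp. split.
  - apply Scl. eapply ucl_mono; [|exact Hp]. intros q [Sq _]; exact Sq.
  - apply Tcl. eapply ucl_mono; [|exact Hp]. intros q [_ Tq]; exact Tq.
Qed.

Lemma uclosed_bigI K : (exists S, K S) -> (forall S, K S -> uclosed S) ->
  uclosed (fun p => forall S, K S -> S p).
Proof.
  intros [S0 KS0] HK. split.
  - intros p Hp. apply (proj1 (HK _ KS0)), Hp, KS0.
  - intros p Hp S KS. apply (proj2 (HK _ KS)). eapply ucl_mono; [|exact Hp].
    intros q Hq. apply Hq, KS.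
Qed.

Lemma nested_inter K : (exists S, K S) ->
  (forall S, K S -> uclosed S /\ exists p, S p) -> nested K ->
  uclosed (fun p => forall S, K S -> S p) /\ exists p, forall S, K S -> S p.
Proof.
  intros HK0 HK Hnest. split.
  - apply uclosed_bigI; auto. intros S KS; apply HK, KS.
  - apply uclosed_directed_inter; auto. intros S T KS KT.
    destruct (Hnest S T KS KT); [exists S|exists T]; split; auto.
Qed.

Lemma uclosed_member A : uclosed (fun p => ultrafilter p /\ p A).
Proof.
  split; [tauto|]. intros p [Hp Hcl]. split; auto.
  destruct (uf_em Hp A) as [|HN]; auto. destruct (Hcl _ HN) as [q [[Hq qA] qN]].
  destruct (uf_compl_excl Hq qA qN).
Qed.

Lemma uclosed_free : uclosed (@free G).
Proof.
  split; [exact free_uf|]. intros p [Hp Hcl]. split; auto.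
  intros A HA Hfin. destruct (Hcl _ HA) as [q [[_ Hq] qA]]. exact (Hq _ qA Hfin).
Qed.

Lemma uclosed_star X : uclosed (star X).
Proof.
  apply (uclosed_ext (S := fun p => free p /\ (ultrafilter p /\ p X))).
  - intro p; unfold star. split; [tauto|]. intros [Hp pX]. split; auto. split; auto.
    apply Hp.
  - apply uclosedI; [apply uclosed_free|apply uclosed_member].
Qed.

Lemma uclosed_eq e : ultrafilter e -> uclosed (fun p => p = e).
Proof.
  intro He. split; [intros; subst; auto|]. intros p [Hp Hcl].
  symmetry. apply uf_eq_of_sub; auto. intros A HA. destruct (Hcl A HA) as [q [-> h]]; auto.
Qed.

Lemma uclosed_mulr_preimage S q : uclosed S -> ultrafilter q ->
  uclosed (fun r => ultrafilter r /\ S (uprod r q)).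
Proof.
  intros [Suf Scl] Hq. split; [tauto|]. intros r [Hr Hcl]. split; auto.
  apply Scl. split; [apply uprod_uf; auto|]. intros A HA.
  rewrite uprodE in HA by assumption.
  destruct (Hcl _ HA) as [r' [[Hr' Sr'] h]]. exists (uprod r' q); split; auto.
  rewrite uprodE; auto.
Qed.

Lemma uclosed_mulr_image S q : uclosed S -> ultrafilter q ->
  uclosed (fun p => exists r, S r /\ p = uprod r q).
Proof.
  intros HS Hq. pose proof (proj1 HS) as Suf.
  split; [intros p [r [Sr ->]]; apply uprod_uf; auto|]. intros u [Hu Hcl].
  set (fiber A := fun r => S r /\ (ultrafilter r /\ (ultrafilter (uprod r q) /\ uprod r q A))).
  assert (Hfiber : forall A, uclosed (fiber A))
    by (intro A; apply uclosedI, (uclosed_mulr_preimage (uclosed_member A) Hq); auto).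
  destruct (@uclosed_directed_inter (fun T => exists A, u A /\ T = fiber A)) as [r Hr].
  - exists (fiber (fun _ => True)), (fun _ => True). split; auto. apply uf_setT, Hu.
  - intros T [A [uA ->]]. split; auto.
    destruct (Hcl A uA) as [p [[r [Sr ->]] h]].
    exists r; split; [|split; [|split]]; auto. apply uprod_uf; auto.
  - intros T T' [A [uA ->]] [B [uB ->]].
    exists (fiber (fun x => A x /\ B x)). split; [exists (fun x => A x /\ B x); split|].
    + apply uf_inter; auto.
    + reflexivity.
    + intros p [Sp [Hp [Hpq H]]].
      split; (split; [|split; [|split]]); auto; apply (uf_superset Hpq H); tauto.
  - assert (Hr0 : fiber (fun _ => True) r) by (apply Hr; exists (fun _ => True); split; [apply uf_setT, Hu|reflexivity]).
    destruct Hr0 as [Sr [Hruf [Hrq _]]].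
    exists r. split; auto. symmetry. apply uf_eq_of_sub; auto.
    intros A HA. apply (Hr (fiber A)). exists A; split; auto.
Qed.

Definition subsemigroup S : Prop := forall p q, S p -> S q -> S (uprod p q).

Lemma ellis_numakura S : (exists p, S p) -> uclosed S -> subsemigroup S ->
  exists e, S e /\ uprod e e = e.
Proof.
  intros HS0 HS Hsemi.
  destruct (@zorn_minimal_set _
      (fun T => (exists p, T p) /\ uclosed T /\ subsemigroup T) S)
    as [M [[[e Me] [HM Msemi]] [MS Mmin]]]; [split; auto|..].
  - intros K HK0 HK Hnest.
    destruct (@nested_inter K HK0) as [Hcl Hne].
    + intros T KT. destruct (HK T KT) as (? & ? & ?); auto.
    + exact Hnest.
    + split; [exact Hne|split; [exact Hcl|]].
      intros p q Hp Hq T KT. apply (HK T KT); [apply Hp|apply Hq]; exact KT.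
  - pose proof (proj1 HM) as Muf.
    exists e. split; auto.
    assert (Mmul_e : forall p, M p -> exists r, M r /\ p = uprod r e).
    { apply Mmin.
      - split; [exists (uprod e e), e; auto|split].
        + exact (uclosed_mulr_image HM (Muf _ Me)).
        + intros p q [r [Mr ->]] [r' [Mr' ->]]. exists (uprod (uprod r e) r'). split.
          * apply Msemi; auto.
          * symmetry; apply uprodA; [apply uprod_uf| |]; apply Muf; auto.
      - intros p [r [Mr ->]]. apply Msemi; auto. }
    destruct (Mmul_e e Me) as [r0 [Mr0 Er0]].
    assert (Mfix : forall p, M p -> M p /\ uprod p e = e).
    { apply Mmin; [|tauto]. split; [exists r0; auto|split].
      + apply (uclosed_ext (S := fun p => M p /\ (ultrafilter p /\ uprod p e = e))).
        * intro p. split; [intros [h1 [_ h2]]|intros [h1 h2]]; auto.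
        * apply uclosedI; auto.
          apply (uclosed_mulr_preimage (uclosed_eq (Muf _ Me)) (Muf _ Me)).
      + intros p q [Mp Ep] [Mq Eq]. split; [apply Msemi; auto|].
        rewrite uprodA, Eq, Ep; auto. }
    apply (Mfix e Me).
Qed.

Lemma free_return_of_Delta_infinite X q : star X q -> ~ Delta_finite q X ->
  exists r, free r /\ uprod r q X.
Proof.
  intros [Hq qX] ND. pose proof (free_uf Hq) as Hquf.
  destruct (@free_ultrafilter_exists (fun g => utrans g q X)) as [r [Hr rX]].
  - intros [L HL]. apply ND. exists L. intros g Hg. exists g; split; auto.
    intro; tauto.
  - exists r; split; auto. rewrite uprodE by (auto; apply free_uf, Hr).
    apply (uf_superset (free_uf Hr) rX). intros g Hg. rewrite utransE in Hg; auto.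
Qed.

Definition free_returning X T : Prop :=
  (exists p, T p) /\ uclosed T /\ (forall p, T p -> star X p) /\
  (forall y, T y -> exists r, free r /\ T (uprod r y)).

Lemma free_returning_inter X K : (exists T, K T) -> (forall T, K T -> free_returning X T) ->
  nested K -> free_returning X (fun p => forall T, K T -> T p).
Proof.
  intros [T0 KT0] HK Hnest.
  destruct (@nested_inter K) as [Hcl Hne]; eauto.
  { intros T KT. destruct (HK T KT) as (? & ? & _); auto. }
  split; [exact Hne|split; [exact Hcl|split]].
  - intros p Hp. apply (HK T0 KT0), Hp, KT0.
  - intros y Hy. assert (Hyuf : ultrafilter y) by apply (HK T0 KT0), Hy, KT0.
    set (returners T := fun r => free r /\ T (uprod r y)).
    destruct (@uclosed_directed_inter (fun R => exists T, K T /\ R = returners T))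
      as [r Hr].
    + exists (returners T0), T0; auto.
    + intros R [T [KT ->]]. destruct (HK T KT) as [_ [HcT [_ Tret]]]. split.
      * apply (uclosed_ext (S := fun r => free r /\ (ultrafilter r /\ T (uprod r y)))).
        -- intro r; unfold returners. split; [tauto|]. intros [Hr Tr].
           split; auto. split; auto. apply Hr.
        -- apply uclosedI; [apply uclosed_free|apply uclosed_mulr_preimage; auto].
      * apply Tret, Hy, KT.
    + intros R R' [T [KT ->]] [T' [KT' ->]].
      destruct (Hnest T T' KT KT') as [h|h].
      * exists (returners T). split; [exists T; auto|].
        intros p [Hp Tp]; split; split; auto.
      * exists (returners T'). split; [exists T'; auto|].
        intros p [Hp Tp]; split; split; auto.
    + exists r. destruct (Hr (returners T0)) as [Hfr _]; eauto.
      split; auto. intros T KT. destruct (Hr (returners T)); eauto.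
Qed.

Lemma minimal_free_returning_fixed X M y :
  free_returning X M ->
  (forall D, free_returning X D -> (forall p, D p -> M p) -> forall p, M p -> D p) ->
  M y -> exists r, free r /\ uprod r y = y.
Proof.
  intros [_ [HcM [MX Mret]]] Mmin My.
  assert (Hyuf : ultrafilter y) by apply MX, My.
  assert (Morbit : forall p, M p -> M p /\ exists r, free r /\ p = uprod r y).
  { apply Mmin; [|tauto]. split; [|split; [|split]].
    - destruct (Mret y My) as [r [Hr Mr]]. exists (uprod r y); eauto.
    - apply uclosedI; auto. apply uclosed_mulr_image; auto. apply uclosed_free.
    - intros p [Mp _]; auto.
    - intros p [Mp [r [Hr ->]]]. destruct (Mret _ Mp) as [s [Hs Ms]].
      exists s; split; auto. split; auto. exists (uprod s r). split.
      + apply uprod_free; auto. apply Hs.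
      + symmetry; apply uprodA; auto; [apply Hs|apply Hr]. }
  destruct (Morbit y My) as [_ [r [Hr Ey]]]. eauto.
Qed.

Lemma idempotent_fixing y r : ultrafilter y -> free r -> uprod r y = y ->
  exists e, free e /\ uprod e e = e /\ uprod e y = y.
Proof.
  intros Hy Hr Ery.
  destruct (@ellis_numakura (fun e => free e /\ uprod e y = y)) as [e [[He Eey] Eee]].
  - exists r; auto.
  - apply (uclosed_ext (S := fun e => free e /\ (ultrafilter e /\ uprod e y = y))).
    + intro e. split; [tauto|]. intros [He Ee]. split; auto. split; auto. apply He.
    + apply uclosedI; [apply uclosed_free|].
      apply (uclosed_mulr_preimage (uclosed_eq Hy) Hy).
  - intros p q [Hp Ep] [Hq Eq]. split.
    + apply uprod_free; auto. apply Hp.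
    + rewrite uprodA, Eq, Ep; auto; [apply Hp|apply Hq].
  - eauto.
Qed.

Lemma not_scattered_idempotent A : ~ scattered A ->
  exists e y, free e /\ uprod e e = e /\ ultrafilter y /\ uprod e y A.
Proof.
  intro NS. unfold scattered in NS.
  apply not_all_ex_not in NS as [X NS].
  apply imply_to_and in NS as [XA NS]. apply imply_to_and in NS as [Xinf NS].
  assert (ND : forall p, star X p -> ~ Delta_finite p X) by (intros p Hp HD; eauto).
  destruct (@zorn_minimal_set _ (free_returning X) (star X))
    as [M [HM [_ Mmin]]].
  - split; [|split; [apply uclosed_star|split; auto]].
    + destruct (free_ultrafilter_exists Xinf) as [u Hu]; eauto.
    + intros y Hy. destruct (free_return_of_Delta_infinite Hy (ND _ Hy)) as [r [Hr rX]].
      exists r; split; auto. split; auto. apply uprod_free; [apply Hr|apply Hy].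
  - intros K HK0 HK Hnest. apply free_returning_inter; auto.
  - destruct HM as [[y My] HM'].
    destruct (@minimal_free_returning_fixed X M y) as [r [Hr Ery]]; auto.
    { split; auto. exists y; exact My. }
    destruct HM' as [_ [MX _]]. destruct (MX y My) as [Hy yX].
    destruct (@idempotent_fixing y r) as [e [He [Eee Eey]]]; auto; [apply Hy|].
    exists e, y. split; auto. split; auto. split; [apply Hy|].
    rewrite Eey. apply (uf_superset (free_uf Hy) yX XA).
Qed.

Lemma gprodl_app (f : nat -> G) l1 l2 : gprodl G f (l1 ++ l2) = gprodl G f l1 ** gprodl G f l2.
Proof.
  induction l1 as [|i l1 IH]; simpl.
  - rewrite gmul_1l; auto.
  - rewrite IH, gmul_assoc; auto.
Qed.

Definition fp_step (acc : list G) a : list G := acc ++ a :: map (fun x => x ** a) acc.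

(* The products of the nonempty subsequences of [L], each taken in the order of [L]. *)
Definition fp_list (L : list G) : list G := fold_left fp_step L [].

Lemma fp_list_rcons L a : fp_list (L ++ [a]) = fp_step (fp_list L) a.
Proof. unfold fp_list; rewrite fold_left_app; reflexivity. Qed.

Section IdempotentTranslate.
Variables (e r : ufam G) (A : gset G).
Hypotheses (He : free e) (Hee : uprod e e = e) (Hr : ultrafilter r) (HA : uprod e r A).

Let Heuf : ultrafilter e := free_uf He.

(* Hindman–Strauss's C^⋆ = {x ∈ C : x⁻¹C ∈ e}. *)
Definition pstar C : gset G := fun x => C x /\ e (fun z => C (x ** z)).

Lemma pstar_mem C : e C -> e (pstar C).
Proof.
  intro HC. apply (uf_inter Heuf HC).
  rewrite <- Hee, uprodE in HC by assumption. exact HC.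
Qed.

Lemma pstar_shift C x : pstar C x -> e (fun z => pstar C (x ** z)).
Proof.
  intros [Cx HCx]. apply (uf_superset Heuf (pstar_mem HCx)).
  intros z [h1 h2]. split; auto.
  apply (uf_superset Heuf h2). intros w; rewrite gmul_assoc; auto.
Qed.

Let B : gset G := pstar (fun x => r (fun z => A (x ** z))).

Lemma pstar_base : e B.
Proof. apply pstar_mem. rewrite uprodE in HA by assumption. exact HA. Qed.

Definition next_gen_ok (L : list G) z : Prop :=
  B z /\ (forall x, In x (fp_list L) -> B (x ** z)) /\ ~ In z L.

Definition next_gen (L : list G) : G := epsilon (inhabits one) (next_gen_ok L).

Lemma next_gen_spec L : (forall x, In x (fp_list L) -> B x) -> next_gen_ok L (next_gen L).
Proof.
  intro HL. unfold next_gen. apply epsilon_spec, (uf_nonempty Heuf).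
  apply (uf_inter Heuf pstar_base), (uf_inter Heuf); [|apply free_notin_list, He].
  apply (uf_big_inter Heuf (L := fp_list L) (S := fun x z => B (x ** z))).
  intros x Hx. exact (pstar_shift (HL x Hx)).
Qed.

Fixpoint gens (n : nat) : list G :=
  match n with 0 => [] | S n => gens n ++ [next_gen (gens n)] end.

Definition gen n : G := next_gen (gens n).

Lemma fp_list_gens n x : In x (fp_list (gens n)) -> B x.
Proof.
  revert x; induction n as [|n IH]; simpl; [contradiction|].
  destruct (next_gen_spec IH) as [Bg [Bxg _]].
  rewrite fp_list_rcons. intros x Hx. apply in_app_iff in Hx as [Hx|[<-|Hx]]; auto.
  apply in_map_iff in Hx as [z [<- Hz]]. auto.
Qed.

Lemma gen_spec n : next_gen_ok (gens n) (gen n).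
Proof. apply next_gen_spec, fp_list_gens. Qed.

Lemma gen_in_gens m n : m < n -> In (gen m) (gens n).
Proof.
  induction n as [|n IH]; intro H; [lia|]. simpl. apply in_app_iff.
  destruct (Nat.eq_dec m n) as [->|N]; [right; left; reflexivity|left; apply IH; lia].
Qed.

Lemma gen_inj m n : gen m = gen n -> m = n.
Proof.
  intro E. destruct (Nat.lt_trichotomy m n) as [h|[h|h]]; auto; exfalso.
  - apply (gen_spec n). rewrite <- E. apply gen_in_gens; auto.
  - apply (gen_spec m). rewrite E. apply gen_in_gens; auto.
Qed.

Lemma gprodl_in_fp_list n l : l <> [] -> StronglySorted lt l -> (forall i, In i l -> i < n) ->
  In (gprodl G gen l) (fp_list (gens n)).
Proof.
  revert l; induction n as [|n IH]; intros l Hne Hs Hlt.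
  - destruct l as [|i l]; [congruence|]. specialize (Hlt i (or_introl eq_refl)); lia.
  - destruct (exists_last Hne) as [l' [a ->]].
    destruct (StronglySorted_app_inv Hs) as [Hs' Hlt'].
    simpl. rewrite fp_list_rcons. unfold fp_step. apply in_app_iff.
    assert (Ha : a < S n) by (apply Hlt, in_app_iff; simpl; auto).
    destruct (Nat.eq_dec a n) as [->|N].
    + right. rewrite gprodl_app. simpl. rewrite mulg1.
      destruct l' as [|i l'].
      * left. simpl. rewrite gmul_1l. reflexivity.
      * right. apply in_map with (f := fun x => x ** gen n). apply IH; auto; [congruence|].
        intros j Hj. apply Hlt'; simpl; auto.
    + left. apply IH; auto. intros j Hj. apply in_app_iff in Hj as [Hj|[<-|[]]].
      * specialize (Hlt' j a Hj (or_introl eq_refl)). lia.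
      * lia.
Qed.

Definition shift n : G :=
  epsilon (inhabits one) (fun z => forall x, In x (fp_list (gens (S n))) -> A (x ** z)).

Lemma shift_spec n x : In x (fp_list (gens (S n))) -> A (x ** shift n).
Proof.
  revert x. unfold shift. apply epsilon_spec, (uf_nonempty Hr).
  apply (uf_big_inter Hr (S := fun x z => A (x ** z))).
  intros x Hx. exact (proj1 (fp_list_gens Hx)).
Qed.

Lemma idempotent_translate_psFP : contains_psFP A.
Proof.
  exists gen, shift. split; [exact gen_inj|].
  intros x [l [Hne [Hs ->]]]. apply Sorted_lt_strong in Hs.
  destruct (exists_last Hne) as [l' [a ->]]. rewrite last_last.
  destruct (StronglySorted_app_inv Hs) as [_ Hlt].
  apply shift_spec, gprodl_in_fp_list; auto.
  intros i Hi. apply in_app_iff in Hi as [Hi|[<-|[]]]; [|lia].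
  specialize (Hlt i a Hi (or_introl eq_refl)); lia.
Qed.

End IdempotentTranslate.

(* Katětov: a maximal C with C ∩ h⁻¹C = ∅ covers G together with h⁻¹C and hC. *)
Lemma translation_partition h : h <> one ->
  exists C, (forall x, C x -> ~ C (h ** x)) /\
    forall x, C x \/ C (h ** x) \/ exists z, C z /\ h ** z = x.
Proof.
  intro Hh.
  set (T := {C | forall x, C x -> ~ C (h ** x)}).
  destruct (@zorn_preorder T (exist _ (fun _ => False) (fun x Hx _ => Hx) : T)
              (fun c d => forall x, proj1_sig c x -> proj1_sig d x))
    as [[C HC] Hmax]; auto.
  - intros Ch HCh.
    set (U := fun x => exists c : T, Ch c /\ proj1_sig c x).
    assert (HU : forall x, U x -> ~ U (h ** x)).
    { intros x [c [Hc cx]] [d [Hd dhx]].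
      destruct (HCh c d Hc Hd) as [E|E]; [apply (proj2_sig d x)|apply (proj2_sig c x)]; auto. }
    exists (exist _ U HU). intros c Hc x Hx. exists c; auto.
  - exists C. split; auto. intro x. apply NNPP; intro N.
    assert (N1 : ~ C x) by tauto. assert (N2 : ~ C (h ** x)) by tauto.
    assert (N3 : ~ exists z, C z /\ h ** z = x) by tauto.
    set (C' := fun z => C z \/ z = x).
    assert (HC' : forall z, C' z -> ~ C' (h ** z)).
    { intros z [Cz| ->] [Chz|Ehz].
      - apply (HC z); auto.
      - apply N3; eauto.
      - auto.
      - apply Hh, (@mulg_cancel_r x). rewrite gmul_1l; auto. }
    apply N1. apply (Hmax (exist _ C' HC')); simpl.
    + intros; left; auto.
    + right; reflexivity.
Qed.

Lemma utrans_fixed h q : ultrafilter q -> utrans h q = q -> h = one.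
Proof.
  intros Hq Eq. apply NNPP; intro Hh.
  destruct (translation_partition Hh) as [C [HC Cover]].
  assert (qC : ~ q C).
  { intro qC. assert (H1 : utrans h q C) by (rewrite Eq; exact qC).
    rewrite utransE in H1 by assumption.
    destruct (uf_nonempty Hq (uf_inter Hq qC H1)) as [x [h1 h2]]. exact (HC x h1 h2). }
  assert (qCover : q (fun x => C x \/ (C (h ** x) \/ exists z, C z /\ h ** z = x)))
    by (apply (uf_superset Hq (uf_setT Hq)); intros x _; apply Cover).
  destruct (uf_union Hq qCover) as [|qC']; [tauto|].
  destruct (uf_union Hq qC') as [q1|q2]; apply qC.
  - rewrite <- Eq, utransE by assumption. exact q1.
  - rewrite <- Eq, utransE in q2 by assumption.
    apply (uf_superset Hq q2). intros x [z [Cz E]]. apply mulg_cancel_l in E. subst; auto.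
Qed.

Lemma utrans_inj a b q : ultrafilter q -> utrans a q = utrans b q -> a = b.
Proof.
  intros Hq E. apply (@mulg_cancel_l (inv b)). rewrite gmul_Vl.
  apply (utrans_fixed Hq). rewrite <- utransM, E, utransM, gmul_Vl, utrans1 by assumption.
  reflexivity.
Qed.

Section PiecewiseShiftedFP.
Variables (g b : nat -> G).
Hypothesis Hg : forall m n, g m = g n -> m = n.

Definition psFP_from n : gset G := fun x => exists l, l <> [] /\ StronglySorted lt l /\
  (forall i, In i l -> n <= i) /\ x = gprodl G g l ** b (last l 0).

Lemma psFP_from0 x : psFP G g b x -> psFP_from 0 x.
Proof.
  intros [l [Hne [Hs ->]]]. exists l. repeat split; auto; [apply Sorted_lt_strong; auto|lia].
Qed.

Lemma psFP_from_cons i n u : i < n -> psFP_from n u -> psFP G g b (g i ** u).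
Proof.
  intros Hi [l [Hne [Hs [Hn ->]]]]. exists (i :: l). split; [congruence|]. split.
  - apply StronglySorted_Sorted. constructor; auto. apply Forall_forall.
    intros j Hj. specialize (Hn j Hj). lia.
  - rewrite last_cons_ne; auto. simpl. rewrite gmul_assoc. reflexivity.
Qed.

Lemma psFP_from_split n u : psFP_from n u ->
  psFP_from (S n) u \/ u = g n ** b n \/ exists w, psFP_from (S n) w /\ u = g n ** w.
Proof.
  intros [l [Hne [Hs [Hn ->]]]]. destruct l as [|i l']; [congruence|].
  apply StronglySorted_inv in Hs as [Hs Hf]. rewrite Forall_forall in Hf.
  assert (Hi : n <= i) by (apply Hn; simpl; auto).
  destruct (Nat.eq_dec i n) as [->|N].
  - right. destruct l' as [|j l''].
    + left. simpl. rewrite mulg1. reflexivity.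
    + right. exists (gprodl G g (j :: l'') ** b (last (j :: l'') 0)). split.
      * exists (j :: l''). split; [congruence|split; [exact Hs|split; [|reflexivity]]].
        intros k Hk. specialize (Hf k Hk). lia.
      * rewrite last_cons_ne by congruence. simpl. rewrite !gmul_assoc. reflexivity.
  - left. exists (i :: l'). split; [congruence|]. split; [constructor; auto; apply Forall_forall; auto|].
    split; auto. intros k [<-|Hk]; [lia|]. specialize (Hf k Hk). lia.
Qed.

Lemma psFP_tail_translate q : free q -> q (psFP G g b) ->
  forall N, exists a n, N <= n /\ q (fun x => exists u, psFP_from n u /\ x = a ** u).
Proof.
  intros Hq qX. pose proof (free_uf Hq) as Hquf.
  induction N as [|N IH].
  - exists one, 0. split; auto. apply (uf_superset Hquf qX). intros x Hx.
    exists x; split; [apply psFP_from0; auto|rewrite gmul_1l; auto].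
  - destruct IH as [a [n [Hn Hy]]].
    assert (H3 : q (fun x => (exists u, psFP_from (S n) u /\ x = a ** u) \/
        (x = a ** (g n ** b n) \/ exists u, psFP_from (S n) u /\ x = (a ** g n) ** u))).
    { apply (uf_superset Hquf Hy). intros x [u [Hu ->]].
      destruct (psFP_from_split Hu) as [h|[->|[w [Hw ->]]]].
      - left; eauto.
      - right; left; reflexivity.
      - right; right. exists w; split; auto. rewrite gmul_assoc; auto. }
    destruct (uf_union Hquf H3) as [h|h].
    + exists a, (S n). split; [lia|auto].
    + destruct (uf_union Hquf h) as [h'|h'].
      * destruct (uf_compl_excl Hquf h').
        apply (uf_superset Hquf (free_notin_list [a ** (g n ** b n)] Hq)).
        intros x Hx E; apply Hx; left; auto.
      * exists (a ** g n), (S n). split; [lia|auto].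
Qed.


Lemma psFP_infinite : ~ finite_set (psFP G g b).
Proof.
  intros [L HL]. set (N := S (length L)).
  enough (N <= length L) by (unfold N in *; lia).
  apply (@injective_bound _ (fun i => g i ** (g N ** b N))).
  - intros i j _ _ E. apply Hg, (mulg_cancel_r E).
  - intros i Hi. apply HL. exists [i; N]. split; [congruence|]. split.
    + apply Sorted_cons; [apply Sorted_cons; constructor|constructor; exact Hi].
    + simpl. rewrite mulg1, gmul_assoc. reflexivity.
Qed.

Lemma psFP_not_scattered A : (forall x, psFP G g b x -> A x) -> ~ scattered A.
Proof.
  intros XA Hsc. destruct (Hsc _ XA psFP_infinite) as [q [[Hq qX] [L HL]]].
  pose proof (free_uf Hq) as Hquf.
  destruct (psFP_tail_translate Hq qX (S (length L))) as [a [n [Hn Ha]]].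
  set (d i := g i ** inv a).
  assert (Hd : forall i, i < n -> utrans (d i) q (psFP G g b)).
  { intros i Hi. rewrite utransE by assumption.
    apply (uf_superset Hquf Ha). intros x [u [Hu ->]]. unfold d.
    rewrite <- gmul_assoc, mulKg. apply (psFP_from_cons Hi Hu). }
  enough (n <= length (map (fun h => utrans h q) L)) by (rewrite length_map in *; lia).
  apply (@injective_bound _ (fun i => utrans (d i) q)).
  - intros i j _ _ E. apply Hg, (@mulg_cancel_r (inv a)), (utrans_inj Hquf E).
  - intros i Hi. destruct (HL _ (Hd i Hi)) as [h [Lh E]]. rewrite (ueq_eq E).
    apply (in_map (fun h => utrans h q)), Lh.
Qed.

End PiecewiseShiftedFP.

Lemma contains_psFP_not_scattered A : contains_psFP A -> ~ scattered A.
Proof. intros [g [b [Hg HA]]]. exact (psFP_not_scattered Hg HA). Qed.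

Lemma scattered_translate a A : scattered A -> scattered (fun x => A (a ** x)).
Proof.
  intros Hsc X XA Xinf.
  set (aX := fun w => exists z, X z /\ w = a ** z).
  destruct (Hsc aX) as [p [[Hp paX] [L HL]]].
  - intros w [z [Xz ->]]. apply XA; auto.
  - intros [L HL]. apply Xinf. exists (map (fun w => inv a ** w) L).
    intros z Xz. rewrite <- (mulKg a z). apply in_map, HL. exists z; auto.
  - pose proof (free_uf Hp) as Hpuf.
    exists (utrans (inv a) p). split; [split|].
    + apply utrans_free; auto.
    + rewrite utransE by assumption. apply (uf_superset Hpuf paX).
      intros w [z [Xz ->]]. rewrite mulKg; auto.
    + exists (map (fun h => inv a ** h ** a) L). intros g Hg.
      rewrite utransM in Hg by assumption.
      assert (Hg' : utrans (a ** g ** inv a) p aX).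
      { rewrite utransE in * by assumption.
        apply (uf_superset Hpuf Hg). intros w Xw. exists (g ** inv a ** w). split; auto.
        rewrite !gmul_assoc. reflexivity. }
      destruct (HL _ Hg') as [h [Lh E]]. apply ueq_eq in E.
      exists (inv a ** h ** a). split; [apply (in_map (fun h => inv a ** h ** a)); auto|].
      intro S. rewrite !utransM by assumption. rewrite mulgK.
      replace (g ** inv a) with (inv a ** (a ** g ** inv a))
        by (rewrite <- !gmul_assoc, mulKg; reflexivity).
      rewrite <- (utransM (inv a) (a ** g ** inv a)), <- (utransM (inv a) h), E
        by assumption.
      tauto.
Qed.

Lemma idempotent_translate_not_scattered e y A :
  free e -> uprod e e = e -> ultrafilter y -> uprod e y A -> ~ scattered A.
Proof.
  intros He Hee Hy HA.
  exact (contains_psFP_not_scattered (idempotent_translate_psFP He Hee Hy HA)).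
Qed.

Lemma not_scattered_iff_psFP A : ~ scattered A <-> contains_psFP A.
Proof.
  split; [|apply contains_psFP_not_scattered].
  intro NS. destruct (not_scattered_idempotent NS) as [e [y [He [Hee [Hy HA]]]]].
  exact (idempotent_translate_psFP He Hee Hy HA).
Qed.

Lemma Sc_hatE p : Sc_hat p <-> ultrafilter p /\ forall A, p A -> ~ scattered A.
Proof.
  split; intros [Hp H]; split; auto; intros A.
  - intros pA Asc. exact (uf_compl_excl Hp pA (H A Asc)).
  - intro Asc. apply (uf_compl Hp). intro pA. exact (H A pA Asc).
Qed.

Lemma Sc_hat_ucl_idem_translates p : ultrafilter p ->
  Sc_hat p <-> ucl (@idem_translates G) p.
Proof.
  intro Hp. rewrite Sc_hatE. split; intros [_ H]; split; auto; intros A pA.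
  - destruct (not_scattered_idempotent (H A pA)) as [e [y [He [Hee [Hy HA]]]]].
    exists (uprod e y). split; auto. exists e, y.
    split; [|split; [|split]]; auto; intro B; [rewrite Hee|]; tauto.
  - destruct (H A pA) as [q [[e [y [He [Hee [Hy E]]]]] qA]].
    rewrite (ueq_eq E) in qA.
    exact (idempotent_translate_not_scattered He (ueq_eq Hee) Hy qA).
Qed.

Lemma Sc_hat_idempotent e : free e -> idempotent e -> Sc_hat e.
Proof.
  intros He Hee. apply Sc_hatE. split; [apply He|]. intros A eA.
  apply (idempotent_translate_not_scattered He (ueq_eq Hee) (free_uf He)).
  rewrite (ueq_eq Hee). exact eA.
Qed.

Lemma uclosed_Sc_hat : uclosed (@Sc_hat G).
Proof.
  split; [intros p [Hp _]; exact Hp|]. intros p [Hp Hcl].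
  apply Sc_hatE. split; auto. intros A pA.
  destruct (Hcl A pA) as [q [Hq qA]]. exact (proj2 (proj1 (Sc_hatE q) Hq) A qA).
Qed.

Lemma Sc_hat_mulr p q : Sc_hat p -> ultrafilter q -> Sc_hat (uprod p q).
Proof.
  rewrite !Sc_hatE. intros [Hp Hsc] Hq. split; [apply uprod_uf; auto|].
  intros A HA. rewrite uprodE in HA by assumption.
  destruct (not_scattered_idempotent (Hsc _ HA)) as [e [y [He [Hee [Hy HB]]]]].
  apply (idempotent_translate_not_scattered He Hee (uprod_uf Hy Hq)).
  rewrite <- uprodA, uprodE by (try apply uprod_uf; auto; apply He). exact HB.
Qed.

Lemma Sc_hat_mull p q : Sc_hat p -> ultrafilter q -> Sc_hat (uprod q p).
Proof.
  rewrite !Sc_hatE. intros [Hp Hsc] Hq. split; [apply uprod_uf; auto|].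
  intros A HA Asc. rewrite uprodE in HA by assumption.
  destruct (uf_nonempty Hq HA) as [x Hx].
  exact (Hsc _ Hx (scattered_translate (a := x) Asc)).
Qed.

Lemma free_idempotent_exists : infinite_group G -> exists e, free e /\ idempotent e.
Proof.
  intro HG.
  destruct (@free_ultrafilter_exists (fun _ => True)) as [u [Hu _]].
  { intros [L HL]. apply HG. exists L. intro x; apply HL; auto. }
  destruct (@ellis_numakura (@free G)) as [e [He Hee]].
  - exists u; auto.
  - apply uclosed_free.
  - intros p q Hp Hq. apply uprod_free; auto. apply Hp.
  - exists e. split; auto. unfold idempotent. rewrite Hee. intro; tauto.
Qed.


End BetaG.

Theorem theorem6p8 (G : Group) (HG : infinite_group G) :
  (forall p : ufam G, ultrafilter p ->
     (Sc_hat (G:=G) p <-> ucl (@idem_translates G) p)) /\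
  uideal (@Sc_hat G) /\
  (forall p : ufam G, ultrafilter p ->
     (Sc_hat (G:=G) p <-> forall A, p A -> contains_psFP A)) /\
  (uclosed (@Sc_hat G) /\
   (forall e, free e -> idempotent e -> Sc_hat (G:=G) e) /\
   (forall I : ufam G -> Prop, uclosed I -> uideal I ->
      (forall e, free e -> idempotent e -> I e) ->
      forall p, Sc_hat (G:=G) p -> I p)).
Proof.
  split; [exact (@Sc_hat_ucl_idem_translates G)|].
  split.
  { split; [intros p [Hp _]; exact Hp|]. split.
    - destruct (free_idempotent_exists HG) as [e [He Hee]].
      exists e. exact (Sc_hat_idempotent He Hee).
    - intros p q Hp Hq. split; [apply Sc_hat_mulr|apply Sc_hat_mull]; auto. }
  split.
  { intros p Hp. rewrite Sc_hatE.
    split; [intros [_ H] A pA|intros H; split; auto; intros A pA];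
      apply not_scattered_iff_psFP; auto. }
  split; [exact (uclosed_Sc_hat G)|split; [exact (@Sc_hat_idempotent G)|]].
  intros I [_ Icl] HI Hidem p Hp. apply Icl.
  apply (ucl_mono (S := @idem_translates G)).
  - intros q [e [y [He [Hee [Hy E]]]]]. rewrite (ueq_eq E).
    exact (proj1 (proj2 (proj2 HI) e y (Hidem e He Hee) Hy)).
  - apply Sc_hat_ucl_idem_translates; [apply Hp|exact Hp].
Qed.
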